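(* Let $d\ge 3$ and let $P$ be a finite set of points in $\mathbb{R}^d$. Let $C$ be the set of centers of all smallest axis-aligned hypercubes enclosing $P$. Then there exists a minimum-width hypercubic shell enclosing $P$ whose center lies in $C$.
   Context: The $L_\infty$ norm is $\|p\|=\max_i|x_i(p)|$; $\mathbf{B}(c,r)=\{q:\|q-c\|\le r\}$ is the axis-aligned hypercube with center $c$ and radius $r$. A smallest enclosing hypercube of $P$ is one of minimum radius containing $P$. A hypercubic shell with center $c$ is $\mathbf{B}(c,r)\setminus\operatorname{int}\mathbf{B}(c,r')$ with $r\ge r'\ge0$, of width $r-r'$; it encloses $P$ if it contains $P$. A minimum-width hypercubic shell enclosing $P$ is one of smallest width among all hypercubic shells enclosing $P$. *)

From HB Require Import structures.
From mathcomp Require Import all_boot all_order all_algebra.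
From mathcomp Require Import reals.
Set Implicit Arguments. Unset Strict Implicit. Unset Printing Implicit Defensive.
Import Order.TTheory GRing.Theory Num.Theory.
Local Open Scope ring_scope.

Definition linf (R : realType) (d : nat) (p : 'rV[R]_d) : R :=
  \big[Num.max/0]_(i < d) `|p ord0 i|.

Definition cube_encloses (R : realType) (d : nat) (P : seq 'rV[R]_d)
  (c : 'rV[R]_d) (r : R) : Prop :=
  0 <= r /\ forall p, p \in P -> linf (p - c) <= r.

Definition smallest_enclosing_cube (R : realType) (d : nat) (P : seq 'rV[R]_d)
  (c : 'rV[R]_d) (r : R) : Prop :=
  cube_encloses P c r /\
  forall c' r', cube_encloses P c' r' -> r <= r'.

(* The shell B(c,r) \ int B(c,r'), r >= r' >= 0, contains P.
   int B(c,r') = { q : ||q - c|| < r' }. *)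
Definition shell_encloses (R : realType) (d : nat) (P : seq 'rV[R]_d)
  (c : 'rV[R]_d) (r r' : R) : Prop :=
  0 <= r' /\ r' <= r /\
  forall p, p \in P -> r' <= linf (p - c) /\ linf (p - c) <= r.

Definition min_width_shell (R : realType) (d : nat) (P : seq 'rV[R]_d)
  (c : 'rV[R]_d) (r r' : R) : Prop :=
  shell_encloses P c r r' /\
  forall c2 r2 r2', shell_encloses P c2 r2 r2' -> r - r' <= r2 - r2'.

(* The smallest enclosing hypercubes of P all have the radius
   r* = max_i (b_i - a_i) / 2, where [a_i, b_i] is the range of the i-th
   coordinate over P, and their centers form the box
   K = prod_i [b_i - r*, a_i + r*].  If a shell of outer radius r encloses P,
   clamping its center into K moves it by at most r - r* in the L_inf norm,
   so the inner radius c |-> min_{p in P} ||p - c|| drops by at most r - r*.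
   The inner radius is 1-Lipschitz, hence attains its maximum on the compact
   box K, and the shell of outer radius r* around a maximiser has minimum
   width. *)
From HB Require Import structures.
From mathcomp Require Import all_boot all_order all_algebra.
From mathcomp Require Import reals classical_sets topology normedtype derive.
From mathcomp Require Import lra.
Import Order.TTheory GRing.Theory Num.Theory.
Import numFieldNormedType.Exports.
Local Open Scope ring_scope.
Local Open Scope classical_set_scope.

Lemma clamp_near (R : realDomainType) (u v x t : R) : u <= v -> 0 <= t ->
  u - t <= x <= v + t ->
  u <= Num.max u (Num.min x v) <= v /\ `|Num.max u (Num.min x v) - x| <= t.
Proof.
move=> uv t0 /andP[ux xv]; rewrite ler_distlC.
case: (leP x v) => xv'; first case: (leP u x) => ux'.
all: try case: (leP u v) => uv'.
all: by split; apply/andP; split; lra.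
Qed.

Section Linf.
Context {R : realType} {d : nat}.
Implicit Types x y : 'rV[R]_d.

Lemma linf_ge0 x : 0 <= linf x.
Proof. exact: bigmax_ge_id. Qed.

Lemma coord_le_linf x i : `|x ord0 i| <= linf x.
Proof. exact: (le_bigmax _ (fun i => `|x ord0 i|)). Qed.

Lemma linf_le x r : 0 <= r -> (forall i, `|x ord0 i| <= r) -> linf x <= r.
Proof. by move=> r0 xr; apply: bigmax_le. Qed.

Lemma linfN x : linf (- x) = linf x.
Proof. by apply: eq_bigr => i _; rewrite mxE normrN. Qed.

Lemma linfD_le x y : linf (x + y) <= linf x + linf y.
Proof.
apply: linf_le => [|i]; first by rewrite addr_ge0 ?linf_ge0.
by rewrite mxE (le_trans (ler_normD _ _)) ?lerD ?coord_le_linf.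
Qed.

Lemma linf_le_norm x : linf x <= `|x|.
Proof.
apply: linf_le => // i; rewrite [`|x|]mx_normrE.
exact: (le_bigmax _ (fun ij => `|x ij.1 ij.2|) (ord0, i)).
Qed.

Lemma linf_lipschitz_continuous (f : 'rV[R]_d -> R) :
  (forall x y, f x <= f y + linf (y - x)) -> continuous f.
Proof.
move=> f_lip x; apply/(@cvgrPdist_lt _ _ _ (nbhs x) (nbhs_filter x)) => e e0.
apply: filterS (@near_ball R _ x e e0) => y; rewrite -ball_normE /= => xy.
have yx_le : linf (y - x) <= `|x - y| by rewrite -linfN opprB linf_le_norm.
have xy_le : linf (x - y) <= `|x - y| := linf_le_norm _.
have := f_lip x y; have := f_lip y x; rewrite ltr_distlC; lra.
Qed.

End Linf.

Section Enclosure.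
Variables (R : realType) (d : nat) (P : seq 'rV[R]_d) (p0 : 'rV[R]_d).
Hypothesis p0P : p0 \in P.
Implicit Types (c p : 'rV[R]_d) (r : R).

Definition coord_min i := \big[Num.min/p0 ord0 i]_(p <- P) p ord0 i.
Definition coord_max i := \big[Num.max/p0 ord0 i]_(p <- P) p ord0 i.

Definition min_cube_radius := \big[Num.max/0]_(i < d) ((coord_max i - coord_min i) / 2).

Definition cube_centers : set 'rV[R]_d :=
  [set c | forall i,
    `[coord_max i - min_cube_radius, coord_min i + min_cube_radius] (c ord0 i)].

Definition inner_radius c := \big[Num.min/linf (p0 - c)]_(p <- P) linf (p - c).

Lemma coord_min_le p i : p \in P -> coord_min i <= p ord0 i.
Proof. by move=> pP; rewrite /coord_min (ge_bigmin_seq _ _ _ _ pP). Qed.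

Lemma le_coord_max p i : p \in P -> p ord0 i <= coord_max i.
Proof. by move=> pP; rewrite /coord_max (le_bigmax_seq _ _ _ _ pP). Qed.

Lemma le_min_cube_radius i : (coord_max i - coord_min i) / 2 <= min_cube_radius.
Proof. exact: (le_bigmax _ (fun i => (coord_max i - coord_min i) / 2)). Qed.

Lemma cube_enclosesP c r : cube_encloses P c r <->
  0 <= r /\ forall i, coord_max i - r <= c ord0 i <= coord_min i + r.
Proof.
split=> [[r0 Pr]|[r0 cr]]; split=> //; [move=> i | move=> p pP].
  have near_c p : p \in P -> c ord0 i - r <= p ord0 i <= c ord0 i + r.
    move=> pP; rewrite -ler_distl; apply: le_trans (Pr p pP).
    by move: (coord_le_linf (p - c) i); rewrite !mxE.
  have /andP[lo0 hi0] := near_c p0 p0P.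
  have hi : coord_max i <= c ord0 i + r.
    by rewrite /coord_max big_seq; apply: bigmax_le => // p /near_c/andP[].
  have lo : c ord0 i - r <= coord_min i.
    by rewrite /coord_min big_seq; apply: le_bigmin => // p /near_c/andP[].
  by apply/andP; split; lra.
apply: linf_le => // i; rewrite !mxE ler_distlC.
have := cr i; have := coord_min_le _ i pP; have := le_coord_max _ i pP; lra.
Qed.

Lemma min_cube_radius_le c r : cube_encloses P c r -> min_cube_radius <= r.
Proof.
move=> /cube_enclosesP[r0 cr]; apply: bigmax_le => // i _.
by have := cr i; lra.
Qed.

Lemma cube_centers_smallest c :
  cube_centers c -> smallest_enclosing_cube P c min_cube_radius.
Proof.
move=> Kc; split; last exact: min_cube_radius_le.
apply/cube_enclosesP; split=> [|i]; first exact: bigmax_ge_id.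
by have := Kc i; rewrite /= in_itv.
Qed.

Lemma cube_centers_neq0 : cube_centers !=set0.
Proof.
exists (\row_i ((coord_min i + coord_max i) / 2)) => i /=.
rewrite mxE in_itv /=; have := le_min_cube_radius i; lra.
Qed.

Lemma compact_cube_centers : compact cube_centers.
Proof.
apply: (@rV_compact _ _ (fun i => `[coord_max i - min_cube_radius,
                                     coord_min i + min_cube_radius])).
by move=> i; exact: segment_compact.
Qed.

Lemma cube_centers_near c r : cube_encloses P c r ->
  exists2 c', cube_centers c' & linf (c' - c) <= r - min_cube_radius.
Proof.
move=> cr; have r_ge := min_cube_radius_le _ _ cr.
move/cube_enclosesP: cr => [_ cr].
pose clamp i := Num.max (coord_max i - min_cube_radius)
                        (Num.min (c ord0 i) (coord_min i + min_cube_radius)).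
have clamp_i i : coord_max i - min_cube_radius <= clamp i
                    <= coord_min i + min_cube_radius
                  /\ `|clamp i - c ord0 i| <= r - min_cube_radius.
  have := cr i; have := le_min_cube_radius i => rs_ge /andP[lo hi].
  by apply: clamp_near; rewrite ?subr_ge0 //; [lra | apply/andP; split; lra].
exists (\row_i clamp i) => [i|].
  by rewrite mxE /= in_itv; exact: (clamp_i i).1.
apply: linf_le => [|i]; first by rewrite subr_ge0.
by rewrite !mxE; exact: (clamp_i i).2.
Qed.

Lemma inner_radius_le c p : p \in P -> inner_radius c <= linf (p - c).
Proof. by move=> pP; rewrite /inner_radius (ge_bigmin_seq _ _ _ _ pP). Qed.

Lemma le_inner_radius c t :
  (forall p, p \in P -> t <= linf (p - c)) -> t <= inner_radius c.
Proof.
by move=> tP; rewrite /inner_radius big_seq; apply: le_bigmin => [|p]; apply: tP.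
Qed.

Lemma inner_radius_lipschitz c c' :
  inner_radius c <= inner_radius c' + linf (c' - c).
Proof.
rewrite -lerBlDr; apply: le_inner_radius => p pP; rewrite lerBlDr.
apply: le_trans (inner_radius_le c _ pP) _.
by rewrite -[p - c](subrKA c') linfD_le.
Qed.

Lemma shell_encloses_inner_radius c r :
  cube_encloses P c r -> shell_encloses P c r (inner_radius c).
Proof.
move=> [_ Pr]; split; first by apply: le_inner_radius => p _; exact: linf_ge0.
split; first exact: le_trans (inner_radius_le c _ p0P) (Pr p0 p0P).
by move=> p pP; rewrite inner_radius_le ?Pr.
Qed.

Lemma shell_width_ge c r r' : shell_encloses P c r r' ->
  exists2 c', cube_centers c' & min_cube_radius - inner_radius c' <= r - r'.
Proof.
move=> [r'0 [r'r Pr]].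
have /cube_centers_near[c' Kc' c'c] : cube_encloses P c r.
  by split=> [|p /Pr[]//]; lra.
exists c' => //; have := inner_radius_lipschitz c c'.
have : r' <= inner_radius c by apply: le_inner_radius => p /Pr[].
lra.
Qed.

Lemma min_width_shell_at_smallest_cube_center : exists c,
  min_width_shell P c min_cube_radius (inner_radius c) /\
  smallest_enclosing_cube P c min_cube_radius.
Proof.
have f_cont : {within cube_centers, continuous inner_radius}.
  exact/continuous_subspaceT/linf_lipschitz_continuous/inner_radius_lipschitz.
have [c /set_mem Kc c_max] :=
  compact_EVT_max cube_centers_neq0 compact_cube_centers f_cont.
have c_cube := cube_centers_smallest _ Kc.
exists c; split=> //; split; first exact: shell_encloses_inner_radius c_cube.1.
by move=> c2 r2 r2' /shell_width_ge[c' /mem_set/c_max]; lra.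
Qed.

End Enclosure.

Theorem lemma3 (R : realType) (d : nat) (hd : (3 <= d)%N)
  (P : seq 'rV[R]_d) :
  exists (c : 'rV[R]_d) (r r' : R),
    min_width_shell P c r r' /\
    (exists rc : R, smallest_enclosing_cube P c rc).
Proof.
case: P => [|p0 P'].
  exists 0, 0, 0; split; first by split=> // c r r' [r'0 [r'r _]]; lra.
  by exists 0; split=> // c r [].
have [c [c_shell c_cube]] :=
  @min_width_shell_at_smallest_cube_center R d _ _ (mem_head p0 P').
by exists c; do 2!eexists; split; [exact: c_shell | eexists; exact: c_cube].
Qed.
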